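(* There is no equal norm tight integer frame with an odd number of elements in $\mathcal{H}_2$.
   Context: $\mathcal{H}_M$ is the real $M$-dimensional Hilbert space, identified with $\mathbb{R}^M$ via a fixed orthonormal basis. An equal norm tight integer frame (ENTIF) with $N$ elements in $\mathcal{H}_M$ is an $M\times N$ integer matrix $A$ of rank $M$ with $AA^T=\lambda I_M$ for some $\lambda>0$ and all columns of the same Euclidean norm. *)

From mathcomp Require Import all_boot all_order all_algebra.
Set Implicit Arguments. Unset Strict Implicit. Unset Printing Implicit Defensive.
Import Order.TTheory GRing.Theory Num.Theory.
Local Open Scope ring_scope.

(* Rank is taken over the rationals (equivalently over the reals).
   Since columns are integer vectors, "same Euclidean norm" is equivalent
   to "same squared norm", stated here via the squared norm. *)
Definition is_ENTIF (M N : nat) (A : 'M[int]_(M, N)) : Prop :=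
  \rank (map_mx (intr : int -> rat) A) = M /\
  (exists lambda : int, 0 < lambda /\ A *m A^T = lambda%:M) /\
  (forall j k : 'I_N, \sum_(i < M) A i j ^+ 2 = \sum_(i < M) A i k ^+ 2).

(* Let a, b be the two rows of an equal norm tight integer frame in H_2, so
   that a_j^2 + b_j^2 = c for all j, sum a_j b_j = 0 and sum a_j^2 = sum b_j^2.
   Summing the column norms gives N c = 2 sum a_j^2, so for N odd c is even
   and a_j + b_j, a_j - b_j are even for every j.  The rows a + b and a - b
   satisfy the same three conditions, hence so do (a + b)/2 and (a - b)/2,
   whose squared norm is half that of a.  Infinite descent forces
   sum a_j^2 = 0, contradicting lambda > 0. *)

From mathcomp Require Import all_boot all_order all_algebra.
From mathcomp Require Import zify ring.
Import Order.TTheory GRing.Theory Num.Theory.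

Set Implicit Arguments.
Unset Strict Implicit.
Unset Printing Implicit Defensive.

Local Open Scope ring_scope.

Lemma Euclid_dvdz_sqr (p : nat) (x : int) :
  prime p -> (p %| x ^+ 2)%Z = (p %| x)%Z.
Proof. by move=> p_pr; rewrite !dvdzE abszX Euclid_dvdX // andbT. Qed.

Section TightPair.

Variable N : nat.
Implicit Types a b : 'I_N -> int.

Definition tight_pair a b : Prop :=
  [/\ forall j k, a j ^+ 2 + b j ^+ 2 = a k ^+ 2 + b k ^+ 2,
      \sum_j a j * b j = 0 & \sum_j a j ^+ 2 = \sum_j b j ^+ 2].

Lemma tight_pair_rotate a b :
  tight_pair a b -> tight_pair (fun j => a j + b j) (fun j => a j - b j).
Proof.
move=> [col dot norm]; split.
- move=> j k.
  have E x y : (x + y) ^+ 2 + (x - y) ^+ 2 = 2 * (x ^+ 2 + y ^+ 2) :> int by ring.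
  by rewrite !E (col j k).
- have E x y : (x + y) * (x - y) = x ^+ 2 - y ^+ 2 :> int by ring.
  by under eq_bigr => j _ do rewrite E; rewrite sumrB norm subrr.
- have E x y : (x + y) ^+ 2 = (x - y) ^+ 2 + (x * y) * 4 :> int by ring.
  under eq_bigr => j _ do rewrite E.
  by rewrite big_split /= -mulr_suml dot mul0r addr0.
Qed.

Lemma tight_pair_sqr_sumD a b :
  tight_pair a b -> \sum_j (a j + b j) ^+ 2 = 2 * \sum_j a j ^+ 2.
Proof.
move=> [_ dot norm].
have E x y : (x + y) ^+ 2 = x ^+ 2 + y ^+ 2 + 2 * (x * y) :> int by ring.
under eq_bigr => j _ do rewrite E.
rewrite !big_split /= -mulr_sumr dot mulr0 addr0 -norm; ring.
Qed.

Lemma tight_pair_divz (c : int) a b :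
  c != 0 -> (forall j, c %| a j)%Z -> (forall j, c %| b j)%Z -> tight_pair a b ->
  tight_pair (fun j => (a j %/ c)%Z) (fun j => (b j %/ c)%Z).
Proof.
move=> c_neq0 dvd_a dvd_b [col dot norm].
have Ea j : a j = (a j %/ c)%Z * c by rewrite divzK.
have Eb j : b j = (b j %/ c)%Z * c by rewrite divzK.
have c2_neq0 : c ^+ 2 != 0 by rewrite expf_neq0.
have sqrM x : (x * c) ^+ 2 = c ^+ 2 * x ^+ 2 by ring.
split.
- move=> j k; apply: (mulfI c2_neq0).
  by rewrite !mulrDr -!sqrM -Ea -Eb -Ea -Eb (col j k).
- apply: (mulfI c2_neq0); rewrite mulr0 mulr_sumr -[RHS]dot.
  by apply: eq_bigr => j _; rewrite [in RHS](Ea j) [in RHS](Eb j); ring.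
- apply: (mulfI c2_neq0); rewrite !mulr_sumr.
  under eq_bigr => j _ do rewrite -sqrM -Ea.
  by rewrite norm; apply: eq_bigr => j _; rewrite -sqrM -Eb.
Qed.

Hypothesis oddN : odd N.

Lemma tight_pair_dvd2D a b : tight_pair a b -> forall j, (2 %| a j + b j)%Z.
Proof.
move=> tp j; have [col _ norm] := tp.
have sum_cols : \sum_k (a k ^+ 2 + b k ^+ 2) = (a j ^+ 2 + b j ^+ 2) * N%:Z.
  by under eq_bigr => k _ do rewrite (col k j); rewrite sumr_const card_ord -mulr_natr natz.
have dvd_col : (2 %| a j ^+ 2 + b j ^+ 2)%Z.
  have coprime2N : coprimez 2 N%:Z by rewrite coprimezE /= coprime2n.
  rewrite -(Gauss_dvdzl _ coprime2N) -sum_cols big_split /= -norm.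
  by rewrite -[X in (_ %| X)%Z]mulr2n -[X in (_ %| X)%Z]mulr_natr dvdz_mull.
have sqrD : (a j + b j) ^+ 2 = a j ^+ 2 + b j ^+ 2 + a j * b j * 2 by ring.
by rewrite -(@Euclid_dvdz_sqr 2) // sqrD rpredD // dvdz_mull.
Qed.

Lemma tight_pair_sqr_sum_eq0 a b : tight_pair a b -> \sum_j a j ^+ 2 = 0.
Proof.
have [n] := ubnP (absz (\sum_j a j ^+ 2)); elim: n a b => // n IHn a b lt_a_n tp.
have dvdD j : (2 %| a j + b j)%Z := tight_pair_dvd2D tp j.
have dvdB j : (2 %| a j - b j)%Z.
  have -> : a j - b j = a j + b j - b j * 2 by ring.
  by rewrite rpredB ?dvdz_mull.
have tp' := tight_pair_divz (isT : (2 : int) != 0) dvdD dvdB (tight_pair_rotate tp).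
set s := \sum_j ((a j + b j) %/ 2)%Z ^+ 2.
have s_half : \sum_j a j ^+ 2 = 2 * s.
  apply: (mulfI (isT : (2 : int) != 0)); rewrite -(tight_pair_sqr_sumD tp) mulrA mulr_sumr.
  by apply: eq_bigr => j _; rewrite -[in LHS](divzK (dvdD j)); ring.
have s_ge0 : 0 <= s by apply: sumr_ge0 => j _; rewrite sqr_ge0.
have IHs : (`|s| < n)%N -> s = 0 := fun lt_s_n => IHn _ _ lt_s_n tp'.
clearbody s; rewrite s_half in lt_a_n *.
have [-> | s_neq0] := eqVneq s 0; first by rewrite mulr0.
by rewrite IHs ?mulr0 //; lia.
Qed.

End TightPair.

Theorem theorem4p8 (N : nat) (A : 'M[int]_(2, N)) :
  odd N -> ~ is_ENTIF A.
Proof.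
move=> oddN [_ [[lam [lam_gt0 AAt]] eq_cols]].
have dotA i k : \sum_j A i j * A k j = lam *+ (i == k).
  have := congr1 (fun B : 'M_2 => B i k) AAt; rewrite !mxE => <-.
  by apply: eq_bigr => j _; rewrite mxE.
have sqr_sum i : \sum_j A i j ^+ 2 = lam.
  by under eq_bigr => j _ do rewrite expr2; rewrite dotA eqxx.
have tp : tight_pair (A 0) (A 1).
  split; last by rewrite !sqr_sum.
  - have lift01 : lift ord0 ord0 = 1 :> 'I_2 by apply/val_inj.
    by move=> j k; have := eq_cols j k; rewrite !big_ord_recl !big_ord0 !addr0 lift01.
  - by rewrite (dotA 0 1).
by move: lam_gt0; rewrite -(sqr_sum 0) (tight_pair_sqr_sum_eq0 oddN tp) ltxx.
Qed.
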